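(* Let $G$ be a $2K_2$-free graph, let $a,b$ be adjacent vertices of $G$, and let $X$ be a minimal dominating set of $G$ with $a,b\in X$ and $|X|>\alpha(G)$. Let $N$ be the set of vertices not in $\{a,b\}$ adjacent to at least one of $a,b$ and let $Y=X\cap N$. If $|Y|>1$, then every vertex of $Y$ is adjacent to both $a$ and $b$.
   Context: All graphs are finite, simple and undirected. $2K_2$-free means no induced subgraph isomorphic to the disjoint union of two edges. $\alpha(G)$ is the maximum size of an independent set of $G$. A dominating set is a vertex set $D$ such that every vertex outside $D$ has a neighbour in $D$; it is minimal if no proper subset is dominating. *)

From mathcomp Require Import all_boot.
Set Implicit Arguments. Unset Strict Implicit. Unset Printing Implicit Defensive.

Definition simple_graph (T : finType) (e : rel T) : Prop :=
  symmetric e /\ irreflexive e.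

Definition twoK2_free (T : finType) (e : rel T) : Prop :=
  forall x1 y1 x2 y2 : T,
    uniq [:: x1; y1; x2; y2] -> e x1 y1 -> e x2 y2 ->
    e x1 x2 || e x1 y2 || e y1 x2 || e y1 y2.

Definition independent (T : finType) (e : rel T) (S : {set T}) : bool :=
  [forall x in S, forall y in S, ~~ e x y].

Definition alpha (T : finType) (e : rel T) : nat :=
  \max_(S : {set T} | independent e S) #|S|.

Definition dominating (T : finType) (e : rel T) (D : {set T}) : bool :=
  [forall v, (v \in D) || [exists d in D, e v d]].

Definition minimal_dominating (T : finType) (e : rel T) (D : {set T}) : bool :=
  dominating e D && [forall D' : {set T}, (D' \proper D) ==> ~~ dominating e D'].

Definition Nab (T : finType) (e : rel T) (a b : T) : {set T} :=
  [set v | (v \notin [set a; b]) && (e v a || e v b)].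

From mathcomp Require Import all_boot.
Set Implicit Arguments. Unset Strict Implicit. Unset Printing Implicit Defensive.

(* By minimality, each of a, b and an offending y (adjacent to a but not to b)
   has a private neighbour outside X, adjacent to no other vertex of X.  The
   four X-vertices a, b, y, y' and these three private neighbours pa, pb, py
   then leave no room for 2K2-freeness: (b pb, y py) forces pb ~ py, which with
   (a y', pb py) forces y' ~ b; then (b y', y py) forces y ~ y', and
   (a pa, pb py) forces pa ~ pb or pa ~ py, each excluded by one more 2K2. *)

Section TwoK2.

Variables (T : finType) (e : rel T).
Hypotheses (e_sym : symmetric e) (e_irr : irreflexive e) (e_2K2 : twoK2_free e).

(* The four vertices of two edges with no edge between them are automatically distinct. *)
Lemma twoK2_freeP x1 y1 x2 y2 :
  e x1 y1 -> e x2 y2 -> e x1 x2 || e x1 y2 || e y1 x2 || e y1 y2.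
Proof.
move=> e1 e2; apply: contraTT isT => /norP[/norP[/norP[n11 n12] n21] n22].
suff uniq4 : uniq [:: x1; y1; x2; y2].
  have := e_2K2 uniq4 e1 e2.
  by rewrite (negbTE n11) (negbTE n12) (negbTE n21) (negbTE n22).
have ne u v : e u v -> u != v by apply: contraTneq => ->; rewrite e_irr.
have x1x2 : x1 != x2 by apply: contraNneq n12 => ->.
have x1y2 : x1 != y2 by apply: contraNneq n11 => ->; rewrite e_sym.
have y1x2 : y1 != x2 by apply: contraNneq n22 => ->.
have y1y2 : y1 != y2 by apply: contraNneq n21 => ->; rewrite e_sym.
by rewrite /= !inE !negb_or (ne _ _ e1) (ne _ _ e2) x1x2 x1y2 y1x2 y1y2.
Qed.

End TwoK2.

Definition private_nb (T : finType) (e : rel T) (X : {set T}) (x v : T) : bool :=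
  [&& v \notin X, e v x & [forall w in X, (w != x) ==> ~~ e v w]].

Section PrivateNeighbour.

Variables (T : finType) (e : rel T) (X : {set T}).

Lemma private_nbN x v w :
  private_nb e X x v -> w \in X -> w != x -> ~~ e v w.
Proof. by case/and3P=> _ _ /forall_inP pv wX; apply: implyP (pv w wX). Qed.

(* An element of a minimal dominating set with a neighbour inside the set is
   not self-dominated in X :\ x, so what X :\ x misses is a private neighbour. *)
Lemma exists_private_nb x z :
  minimal_dominating e X -> x \in X -> z \in X -> z != x -> e x z ->
  exists v, private_nb e X x v.
Proof.
case/andP=> /forallP domX /forallP minX xX zX zx exz.
have := minX (X :\ x); rewrite properD1 //= => /forallPn[v].
rewrite negb_or !inE => /andP[vXx /exists_inP nbv].
have not_nb w : w \in X -> w != x -> ~~ e v w.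
  by move=> wX wx; apply/negP=> evw; apply: nbv; exists w; rewrite // !inE wx.
have vx : v != x by apply: contraNneq (not_nb z zX zx) => ->.
have vX : v \notin X by rewrite vx in vXx.
have /exists_inP[d dX evd] : [exists d in X, e v d].
  by have := domX v; rewrite (negbTE vX).
exists v; rewrite /private_nb vX /=; apply/andP; split.
  by have [<- //|dx] := eqVneq d x; rewrite (negbTE (not_nb d dX dx)) in evd.
by apply/forall_inP=> w wX; apply/implyP; apply: not_nb.
Qed.

End PrivateNeighbour.

Section EdgeNeighbours.

Variables (T : finType) (e : rel T) (X : {set T}).
Hypotheses (e_sym : symmetric e) (e_irr : irreflexive e) (e_2K2 : twoK2_free e).
Hypothesis X_min : minimal_dominating e X.

Lemma adj_edge_both_ends a b y y' :
  e a b -> a \in X -> b \in X -> y \in X -> y' \in X ->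
  y \notin [set a; b] -> y' \notin [set a; b] -> y' != y ->
  e y a -> e y' a || e y' b -> e y b.
Proof.
move=> eab aX bX yX y'X; rewrite !inE !negb_or => /andP[ya yb] /andP[y'a y'b].
move=> y'y eya ey'ab; apply: contraT => nyb.
have ne u v : e u v -> v != u by apply: contraTneq => ->; rewrite e_irr.
have eba : e b a by rewrite e_sym.
have [pa Ppa] := exists_private_nb X_min aX bX (ne _ _ eab) eab.
have [pb Ppb] := exists_private_nb X_min bX aX (ne _ _ eba) eba.
have [py Ppy] := exists_private_nb X_min yX aX (ne _ _ eya) eya.
have adj x p : private_nb e X x p -> e x p by case/and3P=> _ px _; rewrite e_sym.
have nb x p w : private_nb e X x p -> w \in X -> w != x -> e w p = false.
  by move=> Pp wX wx; rewrite e_sym; apply/negbTE/(private_nbN Pp).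
have b_pa := nb _ _ _ Ppa bX (ne _ _ eab).
have y_pa := nb _ _ _ Ppa yX ya.
have y'_pa := nb _ _ _ Ppa y'X y'a.
have a_pb := nb _ _ _ Ppb aX (ne _ _ eba).
have y_pb := nb _ _ _ Ppb yX yb.
have y'_pb := nb _ _ _ Ppb y'X y'b.
have a_py := nb _ _ _ Ppy aX (ne _ _ eya).
have b_py : e b py = false by apply: nb Ppy bX _; rewrite eq_sym.
have y'_py := nb _ _ _ Ppy y'X y'y.
have K := twoK2_freeP e_sym e_irr e_2K2.
have eby : e b y = false by rewrite e_sym (negbTE nyb).
have epbpy : e pb py.
  by have := K _ _ _ _ (adj _ _ Ppb) (adj _ _ Ppy); rewrite eby b_py [e pb y]e_sym y_pb.
have ey'b : e b y'.
  rewrite e_sym; move: ey'ab; case: (boolP (e y' a)) => //= ey'a.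
  have := K a y' _ _ _ epbpy; rewrite e_sym ey'a => /(_ isT).
  by rewrite a_pb a_py y'_pb y'_py.
have eyy' : e y' y.
  by have := K _ _ _ _ ey'b (adj _ _ Ppy); rewrite eby b_py y'_py orbF.
have := K _ _ _ _ (adj _ _ Ppa) epbpy; rewrite a_pb a_py /= => /orP[epapb|epapy].
- by have := K _ _ _ _ eyy' epapb; rewrite y'_pa y'_pb y_pa y_pb.
- by have := K _ _ _ _ ey'b epapy; rewrite b_pa b_py y'_pa y'_py.
Qed.

End EdgeNeighbours.

Theorem claim4 (T : finType) (e : rel T) (a b : T) (X : {set T}) :
  simple_graph e -> twoK2_free e -> e a b ->
  minimal_dominating e X -> a \in X -> b \in X -> alpha e < #|X| ->
  1 < #|X :&: Nab e a b| ->
  forall y, y \in X :&: Nab e a b -> e y a /\ e y b.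
Proof.
move=> [e_sym e_irr] e_2K2 eab X_min aX bX _ Y_gt1 y yY.
have [y' y'Y y'y] : exists2 y', y' \in X :&: Nab e a b & y' != y.
  have /card_gt0P[y' y'Yy] : 0 < #|(X :&: Nab e a b) :\ y|.
    by move: Y_gt1; rewrite (cardsD1 y) yY.
  by exists y'; move: y'Yy; rewrite in_setD1 => /andP[].
case/setIP: yY => yX; rewrite inE => /andP[yab eyab].
case/setIP: y'Y => y'X; rewrite inE => /andP[y'ab ey'ab].
have adj_both := adj_edge_both_ends e_sym e_irr e_2K2 X_min.
have eba : e b a by rewrite e_sym.
have ba : [set b; a] = [set a; b] := setUC _ _.
case/orP: eyab => [eya | eyb].
- by split; last exact: adj_both eab aX bX yX y'X yab y'ab y'y eya ey'ab.
- split=> //; apply: adj_both eba bX aX yX y'X _ _ y'y eyb _; rewrite ?ba //.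
  by rewrite orbC.
Qed.
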